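(* Let $\gamma<\delta$, $c>0$, $g(t)=c(\delta-t)$ on $[\gamma,\delta]$, and let $0<\beta<\alpha$. Then for every concave function $\varphi:[\gamma,\delta]\to[0,\infty)$ that is not identically zero, \[\frac{\int_\gamma^\delta t\,\varphi(t)^{\alpha-\beta}g(t)^\beta\,dt}{\int_\gamma^\delta \varphi(t)^{\alpha-\beta}g(t)^\beta\,dt}\leq\frac{\int_\gamma^\delta t\,(t-\gamma)^{\alpha-\beta}g(t)^\beta\,dt}{\int_\gamma^\delta (t-\gamma)^{\alpha-\beta}g(t)^\beta\,dt}=\gamma+(\delta-\gamma)\frac{\alpha-\beta+1}{\alpha+2}.\] *)

From Stdlib Require Import Reals.
From Coquelicot Require Import Coquelicot.
Open Scope R_scope.

(* Real power x^y for x >= 0, with the convention 0^y = 0 (used only for y > 0). *)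
Definition rpow (x y : R) : R :=
  if Rlt_dec 0 x then Rpower x y else 0.

Definition concave_on (a b : R) (phi : R -> R) : Prop :=
  forall x y l, a <= x <= b -> a <= y <= b -> 0 <= l <= 1 ->
    l * phi x + (1 - l) * phi y <= phi (l * x + (1 - l) * y).

(* Let m be the centroid of the weight (t - gamma)^(alpha-beta) g(t)^beta; it is computed by
   integrating the derivative of (t - gamma)^(alpha-beta+1) g(t)^(beta+1), which vanishes at both
   ends. A nonnegative concave phi makes phi(t) / (t - gamma) nonincreasing, so
   (t - m) phi(t)^(alpha-beta) <= k (t - m) (t - gamma)^(alpha-beta) with
   k = (phi(m) / (m - gamma))^(alpha-beta). Integrated against g^beta the right-hand side
   vanishes, which puts the centroid of phi^(alpha-beta) g^beta to the left of m. The integrals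
   exist because phi agrees on the open interval with a continuous function: a concave function
   is locally Lipschitz inside and its chord slopes are monotone, so it has limits at the ends. *)

From Stdlib Require Import Reals Lra Psatz Classical.
From Coquelicot Require Import Coquelicot.
Open Scope R_scope.

Lemma rpow_pos x y : 0 < x -> rpow x y = Rpower x y.
Proof. intros Hx; unfold rpow; destruct (Rlt_dec 0 x); [reflexivity | lra]. Qed.

Lemma rpow_nonpos x y : x <= 0 -> rpow x y = 0.
Proof. intros Hx; unfold rpow; destruct (Rlt_dec 0 x); [lra | reflexivity]. Qed.

Lemma rpow_gt0 x y : 0 < x -> 0 < rpow x y.
Proof. intros Hx; rewrite rpow_pos by exact Hx; apply exp_pos. Qed.

Lemma rpow_ge0 x y : 0 <= rpow x y.
Proof.
  destruct (Rlt_dec 0 x) as [Hx | Hx].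
  - left; apply rpow_gt0, Hx.
  - rewrite rpow_nonpos by lra; lra.
Qed.

Lemma rpow_mult x y p : 0 <= x -> 0 <= y -> rpow (x * y) p = rpow x p * rpow y p.
Proof.
  intros Hx Hy.
  destruct (Rle_lt_or_eq_dec 0 x Hx) as [Hx' | <-];
    [destruct (Rle_lt_or_eq_dec 0 y Hy) as [Hy' | <-] |].
  - rewrite !rpow_pos by nra; symmetry; apply Rpower_mult_distr; lra.
  - rewrite Rmult_0_r, rpow_nonpos by lra; ring.
  - rewrite Rmult_0_l, rpow_nonpos by lra; ring.
Qed.

Lemma rpow_le x y p : 0 < p -> 0 <= x <= y -> rpow x p <= rpow y p.
Proof.
  intros Hp [Hx Hxy]. destruct (Rle_lt_or_eq_dec 0 x Hx) as [Hx' | <-].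
  - rewrite !rpow_pos by lra; apply Rle_Rpower_l; lra.
  - rewrite rpow_nonpos by lra; apply rpow_ge0.
Qed.

Lemma rpow_plus1 x q : rpow x (q + 1) = x * rpow x q.
Proof.
  destruct (Rlt_dec 0 x).
  - rewrite !rpow_pos, Rpower_plus, Rpower_1 by lra; ring.
  - rewrite !rpow_nonpos by lra; ring.
Qed.

Lemma rpow_lt_near0 p eps : 0 < p -> 0 < eps ->
  exists d, 0 < d /\ forall y, Rabs y < d -> rpow y p < eps.
Proof.
  intros Hp He. exists (Rpower eps (/ p)). split; [apply exp_pos |].
  intros y Hy. destruct (Rlt_dec 0 y).
  - rewrite rpow_pos by lra. rewrite Rabs_pos_eq in Hy by lra.
    replace eps with (Rpower (Rpower eps (/ p)) p)
      by (rewrite Rpower_mult, Rinv_l, Rpower_1; lra).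
    apply Rlt_Rpower_l; lra.
  - rewrite rpow_nonpos by lra; lra.
Qed.

Lemma continuity_pt_rpow p x : 0 < p -> continuity_pt (fun y => rpow y p) x.
Proof.
  intros Hp. destruct (Rtotal_order x 0) as [Hx | [-> | Hx]].
  - apply continuity_pt_locally_ext with (a := - x) (f := fun _ => 0); [lra | | ].
    + intros y Hy. apply Rabs_def2 in Hy. rewrite rpow_nonpos; [reflexivity | lra].
    + reg.
  - intros eps He. destruct (rpow_lt_near0 p eps Hp He) as [d [Hd Hsmall]].
    exists d; split; [lra |]. intros y [_ Hy]. simpl in *. unfold R_dist in *.
    rewrite (rpow_nonpos 0), Rminus_0_r, Rabs_pos_eq by (lra || apply rpow_ge0).
    apply Hsmall. rewrite Rminus_0_r in Hy; exact Hy.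
  - apply continuity_pt_locally_ext with (a := x) (f := fun y => Rpower y p); [lra | |].
    + intros y Hy. apply Rabs_def2 in Hy. rewrite rpow_pos; [reflexivity | lra].
    + apply derivable_continuous_pt. exists (p * Rpower x (p - 1)).
      apply derivable_pt_lim_power; lra.
Qed.

Lemma continuity_pt_rpow_comp f p x : 0 < p -> continuity_pt f x ->
  continuity_pt (fun t => rpow (f t) p) x.
Proof.
  intros Hp Hf. apply (continuity_pt_comp f (fun y => rpow y p)); [exact Hf |].
  apply continuity_pt_rpow, Hp.
Qed.

(* At [0] the derivative needs [q > 1]: the difference quotient is [rpow h (q - 1)]. *)
Lemma derivable_pt_lim_rpow q x : 1 < q ->
  derivable_pt_lim (fun y => rpow y q) x (q * rpow x (q - 1)).
Proof.
  intros Hq. destruct (Rtotal_order x 0) as [Hx | [-> | Hx]].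
  - rewrite rpow_nonpos, Rmult_0_r by lra.
    apply derivable_pt_lim_locally_ext with (a := x - 1) (b := 0) (f := fun _ => 0); [lra | |].
    + intros z Hz. rewrite rpow_nonpos; [reflexivity | lra].
    + apply derivable_pt_lim_const.
  - rewrite (rpow_nonpos 0), Rmult_0_r by lra.
    intros eps He. destruct (rpow_lt_near0 (q - 1) eps ltac:(lra) He) as [d [Hd Hsmall]].
    exists (mkposreal d Hd). intros h Hh0 Hhd. simpl in Hhd.
    rewrite Rplus_0_l, (rpow_nonpos 0) by lra.
    replace q with ((q - 1) + 1) at 1 by ring. rewrite rpow_plus1.
    replace ((h * rpow h (q - 1) - 0) / h - 0) with (rpow h (q - 1)) by (field; exact Hh0).
    rewrite Rabs_pos_eq by apply rpow_ge0. apply Hsmall, Hhd.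
  - rewrite rpow_pos by lra.
    apply derivable_pt_lim_locally_ext with (a := 0) (b := x + 1) (f := fun y => Rpower y q);
      [lra | |].
    + intros z Hz. rewrite rpow_pos; [reflexivity | lra].
    + apply derivable_pt_lim_power; lra.
Qed.

Lemma derivable_pt_lim_rpow_comp f df q x : 1 < q -> derivable_pt_lim f x df ->
  derivable_pt_lim (fun t => rpow (f t) q) x (q * rpow (f x) (q - 1) * df).
Proof.
  intros Hq Hf.
  apply (derivable_pt_lim_comp f (fun y => rpow y q)); [exact Hf |].
  apply derivable_pt_lim_rpow, Hq.
Qed.

Lemma continuity_pt_lipschitz f z r M : 0 < r ->
  (forall t, Rabs (t - z) < r -> Rabs (f t - f z) <= M * Rabs (t - z)) ->
  continuity_pt f z.
Proof.
  intros Hr Hlip eps He.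
  assert (HM : 0 <= Rabs M) by apply Rabs_pos.
  exists (Rmin r (eps / (Rabs M + 1))). split.
  { apply Rmin_pos; [lra | apply Rdiv_lt_0_compat; lra]. }
  intros t [_ Ht]. simpl in *. unfold R_dist in *.
  assert (Hr' : Rmin r (eps / (Rabs M + 1)) <= r) by apply Rmin_l.
  assert (He' : Rmin r (eps / (Rabs M + 1)) <= eps / (Rabs M + 1)) by apply Rmin_r.
  assert (Hd : (Rabs M + 1) * Rabs (t - z) < eps).
  { replace eps with ((Rabs M + 1) * (eps / (Rabs M + 1))) by (field; lra).
    apply Rmult_lt_compat_l; lra. }
  assert (HMt : M * Rabs (t - z) <= Rabs M * Rabs (t - z))
    by (apply Rmult_le_compat_r; [apply Rabs_pos | apply Rle_abs]).
  assert (0 <= Rabs (t - z)) by apply Rabs_pos.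
  specialize (Hlip t ltac:(lra)). nra.
Qed.

Lemma limit1_in_local f g D D' l x r : 0 < r ->
  (forall t, D' t -> Rabs (t - x) < r -> D t /\ g t = f t) ->
  limit1_in f D l x -> limit1_in g D' l x.
Proof.
  intros Hr Hloc Hf eps He. destruct (Hf eps He) as [d [Hd Hlim]].
  exists (Rmin d r). split; [apply Rmin_pos; lra |].
  intros t [Ht Htx]. simpl in *. unfold R_dist in *.
  assert (Rmin d r <= d) by apply Rmin_l. assert (Rmin d r <= r) by apply Rmin_r.
  destruct (Hloc t Ht ltac:(lra)) as [HDt ->]. apply Hlim. split; [exact HDt | simpl; unfold R_dist; lra].
Qed.

Lemma continuity_pt_one_sided f z :
  limit1_in f (fun t => t < z) (f z) z -> limit1_in f (fun t => z < t) (f z) z ->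
  continuity_pt f z.
Proof.
  intros Hl Hr eps He.
  destruct (Hl eps He) as [dl [Hdl Hlim_l]], (Hr eps He) as [dr [Hdr Hlim_r]].
  exists (Rmin dl dr). split; [apply Rmin_pos; lra |].
  intros t [_ Ht]. assert (Rmin dl dr <= dl) by apply Rmin_l. assert (Rmin dl dr <= dr) by apply Rmin_r.
  simpl in *. unfold R_dist in *.
  destruct (Rtotal_order t z) as [Htz | [-> | Htz]].
  - apply Hlim_l. split; [exact Htz | simpl; unfold R_dist; lra].
  - rewrite Rminus_diag, Rabs_R0; exact He.
  - apply Hlim_r. split; [exact Htz | simpl; unfold R_dist; lra].
Qed.

Lemma continuous_extension f a b la lb : a < b ->
  (forall z, a < z < b -> continuity_pt f z) ->
  limit1_in f (fun t => a < t) la a -> limit1_in f (fun t => t < b) lb b ->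
  exists psi, (forall t, a < t < b -> psi t = f t) /\
    forall z, a <= z <= b -> continuity_pt psi z.
Proof.
  intros Hab Hf Hla Hlb.
  set (psi t := if Rle_dec t a then la else if Rle_dec b t then lb else f t).
  assert (Hin : forall t, a < t < b -> psi t = f t).
  { intros t Ht. unfold psi. destruct (Rle_dec t a); [lra |]. destruct (Rle_dec b t); [lra | reflexivity]. }
  assert (Hle : forall t, t <= a -> psi t = la).
  { intros t Ht. unfold psi. destruct (Rle_dec t a); [reflexivity | lra]. }
  assert (Hge : forall t, b <= t -> psi t = lb).
  { intros t Ht. unfold psi. destruct (Rle_dec t a); [lra |]. destruct (Rle_dec b t); [reflexivity | lra]. }
  exists psi. split; [exact Hin |]. intros z Hz.
  destruct (Rle_lt_or_eq_dec a z (proj1 Hz)) as [Haz | <-];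
    [destruct (Rle_lt_or_eq_dec z b (proj2 Hz)) as [Hzb | ->] |].
  - apply continuity_pt_locally_ext with (a := Rmin (z - a) (b - z)) (f := f).
    + apply Rmin_pos; lra.
    + intros y Hy. apply Rabs_def2 in Hy.
      assert (Rmin (z - a) (b - z) <= z - a) by apply Rmin_l.
      assert (Rmin (z - a) (b - z) <= b - z) by apply Rmin_r.
      symmetry; apply Hin; lra.
    + apply Hf; lra.
  - apply continuity_pt_one_sided; rewrite (Hge b) by lra.
    + apply (limit1_in_local f psi (fun t => t < b) _ lb b (b - a)); [lra | | exact Hlb].
      intros t Ht Htb. apply Rabs_def2 in Htb. split; [exact Ht | apply Hin; lra].
    + apply (limit1_in_local (fun _ => lb) psi (fun _ => True) _ lb b 1); [lra | | apply (limit_free (fun _ => lb) _ b b)].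
      intros t Ht _. split; [exact I | apply Hge; lra].
  - apply continuity_pt_one_sided; rewrite (Hle a) by lra.
    + apply (limit1_in_local (fun _ => la) psi (fun _ => True) _ la a 1); [lra | | apply (limit_free (fun _ => la) _ a a)].
      intros t Ht _. split; [exact I | apply Hle; lra].
    + apply (limit1_in_local f psi (fun t => a < t) _ la a (b - a)); [lra | | exact Hla].
      intros t Ht Hta. apply Rabs_def2 in Hta. split; [exact Ht | apply Hin; lra].
Qed.

Lemma antitone_bounded_limit s l r B : l < r ->
  (forall u v, l < u < v -> v < r -> s v <= s u) ->
  (forall u, l < u < r -> s u <= B) ->
  exists S, limit1_in s (fun t => l < t < r) S l.
Proof.
  intros Hlr Hanti HB.
  set (E y := exists u, l < u < r /\ y = s u).
  assert (HEb : bound E) by (exists B; intros y [u [Hu ->]]; apply HB, Hu).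
  assert (HEne : exists y, E y) by (exists (s ((l + r) / 2)), ((l + r) / 2); split; [lra | reflexivity]).
  destruct (completeness E HEb HEne) as [S [HSub HSleast]].
  exists S. intros eps He.
  assert (Hnear : exists u, l < u < r /\ S - eps < s u).
  { apply NNPP. intros Hnone. enough (S <= S - eps) by lra.
    apply HSleast. intros y [u [Hu ->]]. apply Rnot_lt_le. intros Hsu. apply Hnone. exists u; split; assumption. }
  destruct Hnear as [u1 [Hu1 Hsu1]]. exists (u1 - l). split; [lra |].
  intros t [Ht Htl]. simpl in *. unfold R_dist in *. apply Rabs_def2 in Htl.
  assert (s t <= S) by (apply HSub; exists t; split; [exact Ht | reflexivity]).
  assert (s u1 <= s t).
  { destruct (Req_dec t u1) as [-> | Hne]; [lra |]. apply Hanti; lra. }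
  apply Rabs_def1; lra.
Qed.

Section Concave.

Variables (a b : R) (phi : R -> R).
Hypothesis Hconc : concave_on a b phi.

Lemma concave_chord u x v : a <= u -> u < x -> x < v -> v <= b ->
  phi u * (v - x) + phi v * (x - u) <= phi x * (v - u).
Proof.
  intros Hau Hux Hxv Hvb. set (l := (v - x) / (v - u)).
  assert (Hl : 0 <= l <= 1).
  { unfold l; split.
    - apply Rdiv_le_0_compat; lra.
    - apply Rmult_le_reg_r with (v - u); [lra |]. unfold Rdiv; rewrite Rmult_assoc, Rinv_l; lra. }
  assert (Hcx := Hconc u v l ltac:(lra) ltac:(lra) Hl).
  replace (l * u + (1 - l) * v) with x in Hcx by (unfold l; field; lra).
  replace (phi u * (v - x) + phi v * (x - u)) with ((v - u) * (l * phi u + (1 - l) * phi v))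
    by (unfold l; field; lra).
  rewrite (Rmult_comm (phi x)). apply Rmult_le_compat_l; lra.
Qed.

Definition slope u v := (phi v - phi u) / (v - u).

Lemma slope_sym u v : u <> v -> slope u v = slope v u.
Proof. intros Huv; unfold slope; field; lra. Qed.

Lemma concave_slope_le u x v : a <= u -> u < x -> x < v -> v <= b ->
  slope x v <= slope u v <= slope u x.
Proof.
  intros Hau Hux Hxv Hvb. assert (Hch := concave_chord u x v Hau Hux Hxv Hvb).
  unfold slope. split; apply Rmult_le_reg_r with ((v - u) * (x - u) * (v - x)); try (apply Rmult_lt_0_compat; [apply Rmult_lt_0_compat |]; lra);
    field_simplify; try lra; nra.
Qed.

Lemma concave_slope_bounds z t : a < z < b -> a <= t <= b -> t <> z ->
  slope z b <= slope t z <= slope a z.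
Proof.
  intros Hz Ht Htz. destruct (Rlt_or_le t z) as [Hlt | Hge].
  - assert (Htb := concave_slope_le t z b ltac:(lra) Hlt ltac:(lra) ltac:(lra)).
    split; [lra |].
    destruct (Rle_lt_or_eq_dec a t (proj1 Ht)) as [Hat | <-]; [| lra].
    apply (concave_slope_le a t z); lra.
  - rewrite (slope_sym t z) by exact Htz.
    assert (Hat := concave_slope_le a z t ltac:(lra) ltac:(lra) ltac:(lra) ltac:(lra)).
    split; [| lra].
    destruct (Rle_lt_or_eq_dec t b (proj2 Ht)) as [Htb | ->]; [| lra].
    apply (concave_slope_le z t b); lra.
Qed.

Lemma concave_lipschitz z t : a < z < b -> a <= t <= b ->
  Rabs (phi t - phi z) <= (Rabs (slope a z) + Rabs (slope z b)) * Rabs (t - z).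
Proof.
  intros Hz Ht. destruct (Req_dec t z) as [-> | Htz].
  - rewrite Rminus_diag, Rminus_diag, Rabs_R0, Rmult_0_r; lra.
  - replace (phi t - phi z) with (slope t z * (t - z)) by (unfold slope; field; lra).
    rewrite Rabs_mult. apply Rmult_le_compat_r; [apply Rabs_pos |].
    destruct (concave_slope_bounds z t Hz Ht Htz).
    unfold Rabs; repeat destruct Rcase_abs; lra.
Qed.

Lemma concave_continuity_pt z : a < z < b -> continuity_pt phi z.
Proof.
  intros Hz. apply (continuity_pt_lipschitz phi z (Rmin (z - a) (b - z))
    (Rabs (slope a z) + Rabs (slope z b))); [apply Rmin_pos; lra |].
  intros t Ht. apply concave_lipschitz; [exact Hz |].
  assert (Rmin (z - a) (b - z) <= z - a) by apply Rmin_l.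
  assert (Rmin (z - a) (b - z) <= b - z) by apply Rmin_r.
  apply Rabs_def2 in Ht; lra.
Qed.

(* [phi t = phi x0 + slope t x0 * (t - x0)] and the slope is monotone in [t]. *)
Lemma concave_limit_left : a < b -> exists l, limit1_in phi (fun t => a < t) l a.
Proof.
  intros Hab. set (x0 := (a + b) / 2).
  destruct (antitone_bounded_limit (fun t => slope t x0) a x0 (slope a x0)) as [S HS].
  - unfold x0; lra.
  - intros u v Huv Hv. apply (concave_slope_le u v x0); unfold x0 in *; lra.
  - intros u Hu. apply (concave_slope_le a u x0); unfold x0 in *; lra.
  - exists (phi x0 + S * (a - x0)).
    apply (limit1_in_local (fun t => phi x0 + slope t x0 * (t - x0)) phi
             (fun t => a < t < x0) _ _ a (x0 - a)); [unfold x0; lra | |].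
    + intros t Hat Hta. apply Rabs_def2 in Hta. split; [lra |].
      unfold slope; field; lra.
    + apply limit_plus; [apply (limit_free (fun _ => phi x0) _ a a) |].
      apply limit_mul; [exact HS |]. apply limit_minus; [apply lim_x | apply (limit_free (fun _ => x0) _ a a)].
Qed.

Lemma concave_pos_interior : (forall t, a <= t <= b -> 0 <= phi t) ->
  (exists t, a <= t <= b /\ phi t <> 0) -> forall x, a < x < b -> 0 < phi x.
Proof.
  intros Hnn [t0 [Ht0 Hne]] x Hx.
  assert (Hpos0 : 0 < phi t0) by (assert (0 <= phi t0) by (apply Hnn, Ht0); lra).
  destruct (Rtotal_order x t0) as [Hlt | [-> | Hgt]]; [| exact Hpos0 |].
  - assert (Hch := concave_chord a x t0 ltac:(lra) ltac:(lra) Hlt ltac:(lra)).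
    assert (0 <= phi a) by (apply Hnn; lra). nra.
  - assert (Hch := concave_chord t0 x b ltac:(lra) Hgt ltac:(lra) ltac:(lra)).
    assert (0 <= phi b) by (apply Hnn; lra). nra.
Qed.

Lemma concave_ratio_antitone x y : 0 <= phi a -> a < x <= y -> y <= b ->
  phi y * (x - a) <= phi x * (y - a).
Proof.
  intros Ha Hxy Hyb. destruct (Rle_lt_or_eq_dec x y (proj2 Hxy)) as [Hlt | <-]; [| lra].
  assert (Hch := concave_chord a x y ltac:(lra) ltac:(lra) Hlt Hyb). nra.
Qed.

Lemma concave_rpow_ratio_cross p x m : 0 < p -> (forall t, a <= t <= b -> 0 <= phi t) ->
  a < x <= b -> a < m <= b ->
  (x - m) * (rpow (phi x) p * rpow (m - a) p) <= (x - m) * (rpow (phi m) p * rpow (x - a) p).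
Proof.
  intros Hp Hnn Hx Hm.
  assert (Ha : 0 <= phi a) by (apply Hnn; lra).
  assert (Hphx : 0 <= phi x) by (apply Hnn; lra).
  assert (Hphm : 0 <= phi m) by (apply Hnn; lra).
  rewrite <- !rpow_mult by lra.
  destruct (Rle_or_lt x m) as [Hxm | Hmx].
  - apply Rmult_le_compat_neg_l; [lra |]. apply rpow_le; [exact Hp | split; [nra |]].
    apply concave_ratio_antitone; lra.
  - apply Rmult_le_compat_l; [lra |]. apply rpow_le; [exact Hp | split; [nra |]].
    apply concave_ratio_antitone; lra.
Qed.

End Concave.

Lemma concave_on_reflect a b phi : concave_on a b phi -> concave_on (- b) (- a) (fun u => phi (- u)).
Proof.
  intros Hc x y l Hx Hy Hl.
  replace (- (l * x + (1 - l) * y)) with (l * - x + (1 - l) * - y) by ring.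
  apply Hc; lra.
Qed.

Lemma concave_limit_right a b phi : a < b -> concave_on a b phi ->
  exists l, limit1_in phi (fun t => t < b) l b.
Proof.
  intros Hab Hc.
  destruct (concave_limit_left (- b) (- a) (fun u => phi (- u)) (concave_on_reflect a b phi Hc))
    as [l Hl]; [lra |].
  exists l. intros eps He. destruct (Hl eps He) as [d [Hd Hlim]]. exists d; split; [exact Hd |].
  intros t [Htb Ht]. simpl in *. unfold R_dist in *.
  rewrite <- (Ropp_involutive t). apply Hlim. split; [lra |].
  simpl; unfold R_dist. replace (- t - - b) with (- (t - b)) by ring. rewrite Rabs_Ropp; exact Ht.
Qed.

Lemma concave_continuous_extension a b phi : a < b -> concave_on a b phi ->
  exists psi, (forall t, a < t < b -> psi t = phi t) /\
    forall z, a <= z <= b -> continuity_pt psi z.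
Proof.
  intros Hab Hc.
  destruct (concave_limit_left a b phi Hc Hab) as [la Hla].
  destruct (concave_limit_right a b phi Hab Hc) as [lb Hlb].
  apply (continuous_extension phi a b la lb Hab); [| exact Hla | exact Hlb].
  apply concave_continuity_pt, Hc.
Qed.

Lemma ex_RInt_continuity_pt f g a b : a <= b ->
  (forall z, a <= z <= b -> continuity_pt f z) -> (forall t, a < t < b -> f t = g t) ->
  ex_RInt g a b.
Proof.
  intros Hab Hf Hfg. apply (ex_RInt_ext f).
  - rewrite Rmin_left, Rmax_right by exact Hab. exact Hfg.
  - apply (@ex_RInt_continuous R_CompleteNormedModule). rewrite Rmin_left, Rmax_right by exact Hab.
    intros z Hz. apply continuity_pt_filterlim, Hf, Hz.
Qed.

Lemma RInt_gt0 f g a b : a < b ->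
  (forall z, a <= z <= b -> continuity_pt f z) -> (forall t, a < t < b -> f t = g t) ->
  (forall t, a < t < b -> 0 < f t) -> 0 < RInt g a b.
Proof.
  intros Hab Hf Hfg Hpos.
  rewrite <- (RInt_ext f) by (rewrite Rmin_left, Rmax_right by lra; exact Hfg).
  replace 0 with (RInt (fun _ => 0) a b) by (rewrite RInt_const; apply Rmult_0_r).
  apply RInt_lt; [exact Hab | | | exact Hpos].
  - intros z Hz. apply continuity_pt_filterlim, Hf, Hz.
  - intros z Hz. apply continuous_const.
Qed.

Lemma is_RInt_minus_scal f g a b v If Ig : is_RInt f a b If -> is_RInt g a b Ig ->
  is_RInt (fun t => f t - v * g t) a b (If - v * Ig).
Proof. intros Hf Hg. apply (is_RInt_minus f (fun t => v * g t)); [exact Hf | apply (is_RInt_scal g), Hg]. Qed.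

Lemma RInt_centroid_le N D N0 D0 a b m k : a <= b ->
  ex_RInt N a b -> ex_RInt D a b -> ex_RInt N0 a b -> ex_RInt D0 a b ->
  (forall x, a < x < b -> N x - m * D x <= k * (N0 x - m * D0 x)) ->
  RInt N0 a b = m * RInt D0 a b -> 0 < RInt D a b ->
  RInt N a b / RInt D a b <= m.
Proof.
  intros Hab HN HD HN0 HD0 Hpt Hm0 HDpos.
  assert (Hle := is_RInt_le _ _ a b _ _ Hab
    (is_RInt_minus_scal N D a b m _ _ (RInt_correct N a b HN) (RInt_correct D a b HD))
    (is_RInt_scal _ a b k _
       (is_RInt_minus_scal N0 D0 a b m _ _ (RInt_correct N0 a b HN0) (RInt_correct D0 a b HD0)))
    Hpt).
  change (scal k (RInt N0 a b - m * RInt D0 a b)) with (k * (RInt N0 a b - m * RInt D0 a b)) in Hle.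
  rewrite Hm0, Rminus_diag, Rmult_0_r in Hle.
  apply Rmult_le_reg_r with (RInt D a b); [exact HDpos |].
  unfold Rdiv. rewrite Rmult_assoc, Rinv_l by lra. lra.
Qed.

Lemma continuity_pt_beta_weight a b c p q x : 0 < p -> 0 < q ->
  continuity_pt (fun t => rpow (t - a) p * rpow (c * (b - t)) q) x.
Proof.
  intros Hp Hq. apply continuity_pt_mult; apply continuity_pt_rpow_comp; solve [assumption | reg].
Qed.

(* [F t = (t - a)^(p+1) (c (b - t))^(q+1)] vanishes at both ends and
   [F' t = c ((p + 1) (b - t) - (q + 1) (t - a)) (t - a)^p (c (b - t))^q]. *)
Lemma RInt_beta_moment a b c p q : a < b -> 0 < c -> 0 < p -> 0 < q ->
  RInt (fun t => t * rpow (t - a) p * rpow (c * (b - t)) q) a b =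
  (a + (b - a) * ((p + 1) / (p + q + 2))) *
    RInt (fun t => rpow (t - a) p * rpow (c * (b - t)) q) a b.
Proof.
  intros Hab Hc Hp Hq.
  set (D t := rpow (t - a) p * rpow (c * (b - t)) q).
  set (N t := t * rpow (t - a) p * rpow (c * (b - t)) q).
  set (K1 := c * ((p + 1) * b + (q + 1) * a)). set (K2 := c * (p + q + 2)).
  set (F t := rpow (t - a) (p + 1) * rpow (c * (b - t)) (q + 1)).
  assert (HDc : forall x, continuity_pt D x) by (intros x; apply continuity_pt_beta_weight; assumption).
  assert (HNc : forall x, continuity_pt N x).
  { intros x. unfold N. apply (continuity_pt_ext (fun t => t * D t)); [intros t; unfold D; ring |].
    apply continuity_pt_mult; [apply continuity_pt_id | apply HDc]. }
  assert (HF : forall x, is_derive F x (K1 * D x - K2 * N x)).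
  { intros x. apply is_derive_Reals.
    replace (K1 * D x - K2 * N x) with
      ((p + 1) * rpow (x - a) (p + 1 - 1) * (1 - 0) * rpow (c * (b - x)) (q + 1) +
       rpow (x - a) (p + 1) * ((q + 1) * rpow (c * (b - x)) (q + 1 - 1) * (0 * (b - x) + c * (0 - 1))))
      by (replace (p + 1 - 1) with p by ring; replace (q + 1 - 1) with q by ring;
          rewrite !rpow_plus1; unfold K1, K2, D, N; ring).
    apply (derivable_pt_lim_mult (fun t => rpow (t - a) (p + 1)) (fun t => rpow (c * (b - t)) (q + 1))).
    - apply (derivable_pt_lim_rpow_comp (fun t => t - a)); [lra |].
      apply (derivable_pt_lim_minus id (fun _ => a)); [apply derivable_pt_lim_id | apply derivable_pt_lim_const].
    - apply (derivable_pt_lim_rpow_comp (fun t => c * (b - t))); [lra |].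
      apply (derivable_pt_lim_mult (fun _ => c) (fun t => b - t)); [apply derivable_pt_lim_const |].
      apply (derivable_pt_lim_minus (fun _ => b) id); [apply derivable_pt_lim_const | apply derivable_pt_lim_id]. }
  assert (Hint : is_RInt (fun x => K1 * D x - K2 * N x) a b (F b - F a)).
  { apply (is_RInt_derive F); intros x _; [apply HF |]. apply continuity_pt_filterlim.
    apply continuity_pt_minus; apply continuity_pt_mult;
      [apply continuity_pt_const; intros u v; reflexivity | apply HDc |
       apply continuity_pt_const; intros u v; reflexivity | apply HNc]. }
  replace (F b - F a) with 0 in Hint
    by (unfold F; rewrite !Rminus_diag, Rmult_0_r, !(rpow_nonpos 0) by lra; ring).
  assert (HDi : ex_RInt D a b)
    by (apply (ex_RInt_continuity_pt D); [lra | intros z _; apply HDc | reflexivity]).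
  assert (HNi : ex_RInt N a b)
    by (apply (ex_RInt_continuity_pt N); [lra | intros z _; apply HNc | reflexivity]).
  assert (Hzero : K1 * RInt D a b - K2 * RInt N a b = 0).
  { apply (filterlim_locally_unique _ _ _
      (is_RInt_minus_scal _ _ a b K2 _ _ (is_RInt_scal D a b K1 _ (RInt_correct D a b HDi))
         (RInt_correct N a b HNi)) Hint). }
  unfold K1, K2 in Hzero. apply Rmult_eq_reg_l with (c * (p + q + 2)); [| nra].
  field_simplify; [| lra]. nra.
Qed.

Lemma beta_centroid_between a b p q : a < b -> 0 < p -> 0 < q ->
  a < a + (b - a) * ((p + 1) / (p + q + 2)) < b.
Proof.
  intros Hab Hp Hq. assert (Hfrac : 0 < (p + 1) / (p + q + 2) < 1).
  { split; [apply Rdiv_lt_0_compat; lra |].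
    apply Rmult_lt_reg_r with (p + q + 2); [lra |]. unfold Rdiv; rewrite Rmult_assoc, Rinv_l; lra. }
  nra.
Qed.

(* Pointwise, [(x - m) phi(x)^p <= k (x - m) (x - a)^p] with [k = phi(m)^p / (m - a)^p],
   because [phi(x) / (x - a)] is nonincreasing. *)
Lemma concave_centroid_le a b p m phi w : a < m < b -> 0 < p ->
  concave_on a b phi -> (forall t, a <= t <= b -> 0 <= phi t) ->
  (exists t, a <= t <= b /\ phi t <> 0) ->
  (forall z, a <= z <= b -> continuity_pt w z) -> (forall t, a < t < b -> 0 < w t) ->
  RInt (fun t => t * rpow (t - a) p * w t) a b = m * RInt (fun t => rpow (t - a) p * w t) a b ->
  RInt (fun t => t * rpow (phi t) p * w t) a b / RInt (fun t => rpow (phi t) p * w t) a b <= m.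
Proof.
  intros Hm Hp Hconc Hnn Hnz Hwc Hwpos Hmoment.
  assert (Hab : a < b) by lra.
  destruct (concave_continuous_extension a b phi Hab Hconc) as [psi [Hpsi Hpsic]].
  assert (Hrpow_psi : forall z, a <= z <= b -> continuity_pt (fun t => rpow (psi t) p) z)
    by (intros z Hz; apply continuity_pt_rpow_comp; [exact Hp | apply Hpsic, Hz]).
  assert (Hrpow_lin : forall z, continuity_pt (fun t => rpow (t - a) p) z)
    by (intros z; apply continuity_pt_rpow_comp; [exact Hp | reg]).
  set (R0 := rpow (m - a) p). assert (HR0 : 0 < R0) by (apply rpow_gt0; lra).
  apply RInt_centroid_le with (k := rpow (phi m) p / R0)
    (N0 := fun t => t * rpow (t - a) p * w t) (D0 := fun t => rpow (t - a) p * w t);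
    [lra | | | | | | exact Hmoment |].
  - apply (ex_RInt_continuity_pt (fun t => t * rpow (psi t) p * w t)); [lra | |].
    + intros z Hz. repeat apply continuity_pt_mult; auto using continuity_pt_id.
    + intros t Ht. rewrite Hpsi by exact Ht. reflexivity.
  - apply (ex_RInt_continuity_pt (fun t => rpow (psi t) p * w t)); [lra | |].
    + intros z Hz. apply continuity_pt_mult; auto.
    + intros t Ht. rewrite Hpsi by exact Ht. reflexivity.
  - apply (ex_RInt_continuity_pt (fun t => t * rpow (t - a) p * w t)); [lra | | reflexivity].
    intros z Hz. repeat apply continuity_pt_mult; auto using continuity_pt_id.
  - apply (ex_RInt_continuity_pt (fun t => rpow (t - a) p * w t)); [lra | | reflexivity].
    intros z Hz. apply continuity_pt_mult; auto.
  - intros x Hx.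
    assert (Hcross := concave_rpow_ratio_cross a b phi Hconc p x m Hp Hnn ltac:(lra) ltac:(lra)).
    assert (Hw : 0 <= w x) by (left; apply Hwpos, Hx).
    apply Rmult_le_reg_r with R0; [exact HR0 |].
    replace ((x * rpow (phi x) p * w x - m * (rpow (phi x) p * w x)) * R0)
      with ((x - m) * (rpow (phi x) p * R0) * w x) by ring.
    replace (rpow (phi m) p / R0 * (x * rpow (x - a) p * w x - m * (rpow (x - a) p * w x)) * R0)
      with ((x - m) * (rpow (phi m) p * rpow (x - a) p) * w x) by (field; lra).
    apply Rmult_le_compat_r; [exact Hw | exact Hcross].
  - apply (RInt_gt0 (fun t => rpow (psi t) p * w t)); [exact Hab | | |].
    + intros z Hz. apply continuity_pt_mult; auto.
    + intros t Ht. rewrite Hpsi by exact Ht. reflexivity.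
    + intros t Ht. rewrite Hpsi by exact Ht.
      apply Rmult_lt_0_compat; [apply rpow_gt0, (concave_pos_interior a b phi Hconc Hnn Hnz) | apply Hwpos]; exact Ht.
Qed.

Theorem mainTheorem8 (gamma delta c alpha beta : R) (g : R -> R)
  (Hgd : gamma < delta) (Hc : 0 < c)
  (Hg : forall t, gamma <= t <= delta -> g t = c * (delta - t))
  (Hb : 0 < beta) (Hba : beta < alpha) :
  forall phi : R -> R,
    concave_on gamma delta phi ->
    (forall t, gamma <= t <= delta -> 0 <= phi t) ->
    (exists t, gamma <= t <= delta /\ phi t <> 0) ->
    RInt (fun t => t * rpow (phi t) (alpha - beta) * rpow (g t) beta) gamma delta
      / RInt (fun t => rpow (phi t) (alpha - beta) * rpow (g t) beta) gamma delta
    <=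
    RInt (fun t => t * rpow (t - gamma) (alpha - beta) * rpow (g t) beta) gamma delta
      / RInt (fun t => rpow (t - gamma) (alpha - beta) * rpow (g t) beta) gamma delta
    /\
    RInt (fun t => t * rpow (t - gamma) (alpha - beta) * rpow (g t) beta) gamma delta
      / RInt (fun t => rpow (t - gamma) (alpha - beta) * rpow (g t) beta) gamma delta
    = gamma + (delta - gamma) * ((alpha - beta + 1) / (alpha + 2)).
Proof.
  intros phi Hconc Hnn Hnz.
  set (p := alpha - beta). assert (Hp : 0 < p) by (unfold p; lra).
  set (w t := rpow (c * (delta - t)) beta).
  assert (Hgw : forall F : R -> R -> R,
    RInt (fun t => F t (rpow (g t) beta)) gamma delta = RInt (fun t => F t (w t)) gamma delta).
  { intros F. apply RInt_ext. rewrite Rmin_left, Rmax_right by lra.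
    intros t Ht. unfold w. rewrite Hg by lra. reflexivity. }
  rewrite (Hgw (fun t y => t * rpow (phi t) p * y)), (Hgw (fun t y => rpow (phi t) p * y)),
    (Hgw (fun t y => t * rpow (t - gamma) p * y)), (Hgw (fun t y => rpow (t - gamma) p * y)).
  replace (alpha + 2) with (p + beta + 2) by (unfold p; ring).
  set (m := gamma + (delta - gamma) * ((p + 1) / (p + beta + 2))).
  assert (Hm : gamma < m < delta) by (apply beta_centroid_between; assumption).
  assert (Hmoment : RInt (fun t => t * rpow (t - gamma) p * w t) gamma delta =
                    m * RInt (fun t => rpow (t - gamma) p * w t) gamma delta)
    by (apply RInt_beta_moment; assumption).
  assert (Hwc : forall z, continuity_pt w z)
    by (intros z; apply continuity_pt_rpow_comp; [exact Hb | reg]).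
  assert (Hden : 0 < RInt (fun t => rpow (t - gamma) p * w t) gamma delta).
  { apply (RInt_gt0 (fun t => rpow (t - gamma) p * w t)); [exact Hgd | | reflexivity |].
    - intros z _. apply continuity_pt_beta_weight; assumption.
    - intros t Ht. apply Rmult_lt_0_compat; apply rpow_gt0; nra. }
  assert (Hratio : RInt (fun t => t * rpow (t - gamma) p * w t) gamma delta /
                   RInt (fun t => rpow (t - gamma) p * w t) gamma delta = m)
    by (rewrite Hmoment; field; lra).
  rewrite Hratio. split; [| reflexivity].
  apply (concave_centroid_le gamma delta p m phi w); auto.
  intros t Ht. apply rpow_gt0. nra.
Qed.
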